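(* Let $P(\lambda)$ be an $n\times n$ singular matrix polynomial of degree $d$ and normal rank $n-k$, and let $S_R(\lambda)=[x_1(\lambda)\ \dots\ x_k(\lambda)]$ be an $n\times k$ matrix polynomial whose columns form a minimal basis of the right nullspace of $P(\lambda)$, with right minimal indices $m_1,\dots,m_k$. Then there exists $V\in\mathbb C^{n\times k}$ such that the polynomial $\det(V^*S_R(\lambda))$ has exactly $M=m_1+\cdots+m_k$ simple zeros.
   Context: Normal rank: $\mathrm{nrank}(P)=\max_{\zeta\in\mathbb C}\mathrm{rank}\,P(\zeta)$; $P$ is singular if $\det P(\lambda)\equiv0$. The right nullspace of $P$ is $\{x(\lambda)\in\mathbb C(\lambda)^n: P(\lambda)x(\lambda)\equiv0\}$. A polynomial basis of it is minimal if the sum of the degrees of its vectors is minimal among all polynomial bases; these degrees are the right minimal indices. *)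

From mathcomp Require Import all_boot all_order all_algebra.
From mathcomp Require Import fraction reals complex.
Set Implicit Arguments. Unset Strict Implicit. Unset Printing Implicit Defensive.
Import Order.TTheory GRing.Theory Num.Theory.
Local Open Scope ring_scope.

Section MatrixPolynomials.
Variable C : fieldType.

Definition mxpoly_eval m n (P : 'M[{poly C}]_(m, n)) (z : C) : 'M[C]_(m, n) :=
  map_mx (fun p => p.[z]) P.

Definition mxpoly_deg m n (P : 'M[{poly C}]_(m, n)) : nat :=
  (\max_(i < m) \max_(j < n) size (P i j)).-1.

Definition is_nrank m n (P : 'M[{poly C}]_(m, n)) (r : nat) : Prop :=
  (exists z : C, \rank (mxpoly_eval P z) = r) /\
  (forall z : C, (\rank (mxpoly_eval P z) <= r)%N).

Definition singular_mxpoly n (P : 'M[{poly C}]_n) : Prop := \det P = 0.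

Definition ratfun := {fraction {poly C}}.
Definition fracmx m n (A : 'M[{poly C}]_(m, n)) : 'M[ratfun]_(m, n) :=
  map_mx (@FracField.tofrac {poly C}) A.

Definition in_right_nullspace m n (P : 'M[{poly C}]_(m, n)) (x : 'cV[ratfun]_n) :
  Prop := fracmx P *m x = 0.

Definition right_nullspace_poly_basis m n k (P : 'M[{poly C}]_(m, n))
    (S : 'M[{poly C}]_(n, k)) : Prop :=
  [/\ forall j : 'I_k, in_right_nullspace P (col j (fracmx S)),
      \rank (fracmx S) = k &
      forall x : 'cV[ratfun]_n, in_right_nullspace P x ->
        (x^T <= (fracmx S)^T)%MS].

Definition vec_deg n (x : 'cV[{poly C}]_n) : nat := (\max_(i < n) size (x i ord0)).-1.

Definition col_deg_sum n k (S : 'M[{poly C}]_(n, k)) : nat :=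
  \sum_(j < k) vec_deg (col j S).

Definition right_minimal_basis m n k (P : 'M[{poly C}]_(m, n))
    (S : 'M[{poly C}]_(n, k)) : Prop :=
  right_nullspace_poly_basis P S /\
  forall k' (T : 'M[{poly C}]_(n, k')), right_nullspace_poly_basis P T ->
    (col_deg_sum S <= col_deg_sum T)%N.

Definition simple_zero (p : {poly C}) (z : C) : bool := mup z p == 1%N.

Definition has_exactly_simple_zeros (p : {poly C}) (N : nat) : Prop :=
  p != 0 /\
  exists s : seq C, [/\ uniq s, size s = N & forall z, (z \in s) = simple_zero p z].

End MatrixPolynomials.

Definition conjT (R : rcfType) m n (V : 'M[R[i]]_(m, n)) : 'M[R[i]]_(n, m) :=
  (map_mx (fun z => z^*) V)^T.

From mathcomp Require Import all_boot all_order all_algebra.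
From mathcomp Require Import perm fraction reals complex.
From Stdlib Require Import Classical.
Set Implicit Arguments. Unset Strict Implicit. Unset Printing Implicit Defensive.
Import Order.TTheory GRing.Theory Num.Theory.
Local Open Scope ring_scope.

(* A minimal basis S has full column rank at every point, and so does the matrix H of
   its highest column-degree coefficients: otherwise some column could be replaced by a
   polynomial combination of strictly smaller degree.  Hence, for constant V, the
   polynomial det [S^T; V] has degree at most M, with coefficient det [H^T; V] in
   degree M.  Generic constant rows can be added to S^T keeping [S^T(z); V] of full
   rank at every z, up to the last row; the determinant is affine in the last row,
   giving a pencil p + t q where p has degree exactly M and q does not vanish at the
   zeros of p.  For all but finitely many t such a pencil has only simple zeros, since
   a double zero is a zero of the Wronskian p'q - pq'.  Finally, if Q is the inverse of
   [H^T; V] and W its first k columns, then det (S^T W) = det Q * det [S^T; V], and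
   V := conj W satisfies V^* = W^T. *)

Section PolyCoef.
Variable R : nzSemiRingType.

Lemma size_eqS_coef (p : {poly R}) i :
  (size p <= i.+1)%N -> (size p == i.+1) = (p`_i != 0).
Proof.
rewrite leq_eqVlt ltnS => /predU1P [sp|spi]; last first.
  by rewrite ltn_eqF ?ltnS // (leq_sizeP _ _ spi) ?eqxx.
have -> : p`_i = lead_coef p by rewrite lead_coefE sp.
by rewrite sp eqxx lead_coef_eq0 -size_poly_eq0 sp.
Qed.

Lemma coefM_size_leq (p q : {poly R}) a b :
  (size p <= a.+1)%N -> (size q <= b.+1)%N -> (p * q)`_(a + b) = p`_a * q`_b.
Proof.
move=> sp sq; rewrite coefM (bigD1 (@Ordinal (a + b).+1 a (leq_addr b a))) //=.
rewrite addKn big1 ?addr0 // => j ja; have [jlt|jge] := ltnP j a.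
  by rewrite [q`__]nth_default ?mulr0 // (leq_trans sq) // ltn_subRL ltn_add2r.
rewrite [p`__]nth_default ?mul0r // (leq_trans sp) // ltn_neqAle jge andbT.
by apply: contraNneq ja => aj; apply/eqP/val_inj.
Qed.

Lemma size_coef_prod_leq (I : Type) (r : seq I) (f : I -> {poly R}) (d : I -> nat) :
  (forall i, size (f i) <= (d i).+1)%N ->
  (size (\prod_(i <- r) f i)%R <= (\sum_(i <- r) d i).+1)%N /\
  (\prod_(i <- r) f i)`_(\sum_(i <- r) d i) = \prod_(i <- r) (f i)`_(d i).
Proof.
move=> fd; elim: r => [|i r [IHs IHc]]; first by rewrite !big_nil size_poly1 coef1.
rewrite !big_cons coefM_size_leq // IHc; split=> //.
rewrite (leq_trans (size_polyMleq _ _)) // -subn1 leq_subLR add1n -addnS -addSn.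
exact: leq_add.
Qed.

End PolyCoef.

Section Generic.
Variable F : closedFieldType.

Definition generic (P : F -> Prop) : Prop :=
  exists s : seq F, forall t, t \notin s -> P t.

Lemma generic_exists (P : F -> Prop) : generic P -> exists t, P t.
Proof.
case=> s Ps; have /closed_nonrootP [t] : \prod_(x <- s) ('X - x%:P) != 0.
  by rewrite monic_neq0 // monic_prod_XsubC.
by rewrite root_prod_XsubC => /Ps; exists t.
Qed.

Lemma genericI (P Q : F -> Prop) :
  generic P -> generic Q -> generic (fun t => P t /\ Q t).
Proof.
case=> s Ps [r Qr]; exists (s ++ r) => t.
by rewrite mem_cat negb_or => /andP [/Ps ? /Qr ?].
Qed.

Lemma generic_all (I : eqType) (r : seq I) (P : I -> F -> Prop) :
  (forall i, i \in r -> generic (P i)) ->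
  generic (fun t => forall i, i \in r -> P i t).
Proof.
elim: r => [|i r IHr] Pr; first by exists [::].
have [|s Ps] := genericI (Pr i (mem_head i r)) (IHr _).
  by move=> j jr; apply: Pr; rewrite in_cons jr orbT.
by exists s => t /Ps [Pit Prt] j; rewrite in_cons => /predU1P [->|/Prt].
Qed.

Lemma exists_root_seq (q : {poly F}) :
  q != 0 -> exists rs : seq F, forall z, root q z = (z \in rs).
Proof.
have [rs defq] := closed_field_poly_normal q => q0; exists rs => z.
by rewrite defq rootZ ?lead_coef_eq0 // root_prod_XsubC.
Qed.

Lemma generic_nonroot (q : {poly F}) : q != 0 -> generic (fun t => ~~ root q t).
Proof. by case/exists_root_seq=> rs rsE; exists rs => t; rewrite rsE. Qed.

End Generic.

Section SimpleZeros.
Variable F : fieldType.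

Lemma mup_simple_root (f : {poly F}) z :
  root f z -> ~~ root f^`() z -> mup z f = 1%N.
Proof.
move=> fz f'z; have f0 : f != 0 by apply: contraNneq f'z => ->; rewrite deriv0 root0.
apply/eqP; rewrite eqn_leq mup_leq // mup_geq // expr1 dvdp_XsubCl fz andbT.
apply: contra f'z => /dvdpP [g ->].
by rewrite derivM deriv_exp /root !hornerE subrr /= !(mulr0, mul0r, addr0).
Qed.

Lemma has_exactly_simple_zerosZ (f : {poly F}) c M :
  c != 0 -> has_exactly_simple_zeros f M -> has_exactly_simple_zeros (c *: f) M.
Proof.
move=> c0 [f0 [s [us ss fs]]]; split; first by rewrite scale_poly_eq0 negb_or c0.
by exists s; split=> // z; rewrite fs /simple_zero -mul_polyC mupMr // rootC.
Qed.

End SimpleZeros.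

Section Pencil.
Variable F : closedFieldType.
Hypothesis F0 : has_pchar0 F.

Lemma has_exactly_simple_zerosP (f : {poly F}) M :
  size f = M.+1 -> (forall z, root f z -> ~~ root f^`() z) ->
  has_exactly_simple_zeros f M.
Proof.
move=> sf sepf; have f0 : f != 0 by rewrite -size_poly_eq0 sf.
have [rs Ef] := closed_field_poly_normal f.
have lf0 : lead_coef f != 0 by rewrite lead_coef_eq0.
have rootE z : root f z = (z \in rs) by rewrite Ef rootZ // root_prod_XsubC.
have mupE z : mup z f = count_mem z rs.
  by rewrite Ef -mul_polyC mupMr ?rootC // mu_prod_XsubC.
have countE z : count_mem z rs = (z \in rs).
  rewrite -mupE -rootE; have [fz|/mupNroot -> //] := boolP (root f z).
  by rewrite mup_simple_root ?sepf.
split=> //; exists rs; split; first exact: count_mem_uniq.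
  by move: sf; rewrite Ef size_scale // size_prod_XsubC => -[].
by move=> z; rewrite /simple_zero mupE countE; case: (z \in rs).
Qed.

Lemma deriv_neq0 (p : {poly F}) : (1 < size p)%N -> p^`() != 0.
Proof.
move=> sp; have [i si] : exists i, size p = i.+2.
  by move: sp; case: (size p) => [|[|i]] // _; exists i.
apply/negP => /eqP dp0; have := coef_deriv p i; rewrite dp0 coef0 -mulr_natr => /esym/eqP.
rewrite mulf_eq0 (proj1 (pcharf0P F) F0) /= orbF; apply/negP.
have -> : p`_i.+1 = lead_coef p by rewrite lead_coefE si.
by rewrite lead_coef_eq0 -size_poly_eq0 si.
Qed.

Lemma wronskian_neq0 (p q : {poly F}) :
  coprimep p q -> p^`() != 0 -> p^`() * q - p * q^`() != 0.
Proof.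
move=> cpq dp0; rewrite subr_eq0; apply/negP => /eqP E.
have p0 : p != 0 by apply: contraNneq dp0 => ->; rewrite deriv0.
have : p %| p^`() by rewrite -(Gauss_dvdpl _ cpq) E dvdp_mulr.
by move/(dvdp_leq dp0); rewrite leqNgt lt_size_deriv.
Qed.

Lemma generic_size_pencil (p q : {poly F}) :
  p != 0 -> (size q <= size p)%N -> generic (fun t => size (p + t *: q) = size p).
Proof.
move=> p0 sqp; have [i sp] : exists i, size p = i.+1.
  by exists (size p).-1; rewrite prednK // size_poly_gt0.
have spt t : (size (p + t *: q)%R <= i.+1)%N.
  by rewrite -sp (leq_trans (size_polyD _ _)) // geq_max leqnn (leq_trans (size_scale_leq _ _)).
have pi0 : p`_i != 0 by rewrite -size_eqS_coef sp.
exists [:: - (p`_i / q`_i)] => t; rewrite mem_seq1 sp => tpq; apply/eqP.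
rewrite size_eqS_coef // coefD coefZ; have [->|qi0] := eqVneq q`_i 0; first by rewrite mulr0 addr0.
apply: contra tpq; rewrite addr_eq0 => /eqP ->.
by rewrite mulNr opprK mulfK.
Qed.

(* A double zero z of p + t q is a zero of the Wronskian and forces t = - p(z) / q(z). *)
Lemma generic_pencil_separable (p q : {poly F}) :
  coprimep p q -> p^`() != 0 ->
  generic (fun t => forall z, root (p + t *: q) z -> ~~ root (p + t *: q)^`() z).
Proof.
move=> cpq dp0; have [rs rsE] := exists_root_seq (wronskian_neq0 cpq dp0).
exists [seq - (p.[z] / q.[z]) | z <- rs] => t tN z.
rewrite derivD derivZ /root !hornerE => fz; apply: contra tN => f'z.
have qz : q.[z] != 0.
  apply/negP => /eqP qz0; move: fz; rewrite qz0 mulr0 addr0 => pz.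
  by move: (coprimep_root cpq pz); rewrite qz0 eqxx.
have pz : p.[z] = - (t * q.[z]) by apply/eqP; rewrite -addr_eq0.
have p'z : p^`().[z] = - (t * q^`().[z]) by apply/eqP; rewrite -addr_eq0.
apply/mapP; exists z; last by rewrite pz mulNr opprK mulfK.
by rewrite -rsE /root !hornerE pz p'z !mulNr opprK mulrAC addNr.
Qed.

Lemma generic_pencil_simple_zeros (p q : {poly F}) M :
  size p = M.+1 -> (size q <= M.+1)%N -> coprimep p q ->
  generic (fun t => size (p + t *: q) = M.+1 /\ has_exactly_simple_zeros (p + t *: q) M).
Proof.
move=> sp sq cpq; have p0 : p != 0 by rewrite -size_poly_eq0 sp.
have gen_size := generic_size_pencil p0 (leq_trans sq (eq_leq (esym sp))).
case: M sp sq gen_size => [|M] sp sq gen_size.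
  have [s Hs] := gen_size; exists s => t /Hs; rewrite sp => st.
  have f0 : p + t *: q != 0 by rewrite -size_poly_eq0 st.
  split=> //; apply: has_exactly_simple_zerosP => // z fz.
  by have := root_size_gt1 f0 fz; rewrite st.
have [|s Hs] := genericI gen_size (generic_pencil_separable cpq (deriv_neq0 _)).
  by rewrite sp.
exists s => t /Hs [st sept]; rewrite sp in st.
by split=> //; apply: has_exactly_simple_zerosP.
Qed.

End Pencil.

Section DetRowDegrees.
Variable R : comNzRingType.

Definition row_coef_mx m n (d : 'I_m -> nat) (B : 'M[{poly R}]_(m, n)) : 'M[R]_(m, n) :=
  \matrix_(i, j) (B i j)`_(d i).

Section RowDegreeBound.
Variables (n : nat) (B : 'M[{poly R}]_n) (d : 'I_n -> nat).
Hypothesis Bd : forall i j, (size (B i j) <= (d i).+1)%N.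

Lemma size_det_row_deg : (size (\det B) <= (\sum_i d i).+1)%N.
Proof.
rewrite (leq_trans (size_sum _ _ _)) //; apply/bigmax_leqP => s _.
rewrite mulr_sign; case: (odd_perm s); rewrite ?size_polyN;
  exact: (size_coef_prod_leq _ (fun i => Bd i (s i))).1.
Qed.

Lemma coef_det_row_deg : (\det B)`_(\sum_i d i) = \det (row_coef_mx d B).
Proof.
rewrite coef_sum; apply: eq_bigr => s _; rewrite !mulr_sign.
under [in RHS]eq_bigr do rewrite mxE.
by case: (odd_perm s); rewrite ?coefN (size_coef_prod_leq _ (fun i => Bd i (s i))).2.
Qed.

End RowDegreeBound.
End DetRowDegrees.

Section Evaluation.
Variable F : fieldType.

Lemma mxpoly_evalE m n (A : 'M[{poly F}]_(m, n)) z :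
  mxpoly_eval A z = map_mx (horner_eval z) A.
Proof. by apply/matrixP => i j; rewrite !mxE. Qed.

Lemma mxpoly_evalM m n p (A : 'M[{poly F}]_(m, n)) (B : 'M_(n, p)) z :
  mxpoly_eval (A *m B) z = mxpoly_eval A z *m mxpoly_eval B z.
Proof. by rewrite !mxpoly_evalE map_mxM. Qed.

Lemma mxpoly_evalC m n (V : 'M[F]_(m, n)) z : mxpoly_eval (map_mx polyC V) z = V.
Proof. by apply/matrixP => i j; rewrite !mxE hornerC. Qed.

Lemma mxpoly_eval_tr m n (A : 'M[{poly F}]_(m, n)) z :
  mxpoly_eval A^T z = (mxpoly_eval A z)^T.
Proof. by rewrite /mxpoly_eval map_trmx. Qed.

Lemma root_det_mxpoly n (A : 'M[{poly F}]_n) z :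
  root (\det A) z = ~~ row_free (mxpoly_eval A z).
Proof.
by rewrite /root -horner_evalE -det_map_mx -mxpoly_evalE row_free_unit unitmxE unitfE negbK.
Qed.

Definition stack_mx k l n (T : 'M[{poly F}]_(k, n)) (V : 'M[F]_(l, n)) :
  'M[{poly F}]_(k + l, n) := col_mx T (map_mx polyC V).

Lemma mxpoly_eval_stack k l n (T : 'M[{poly F}]_(k, n)) (V : 'M[F]_(l, n)) z :
  mxpoly_eval (stack_mx T V) z = col_mx (mxpoly_eval T z) V.
Proof. by rewrite mxpoly_evalE map_col_mx -!mxpoly_evalE mxpoly_evalC. Qed.

End Evaluation.

Section Stack.
Variables (F : fieldType) (k l : nat) (T : 'M[{poly F}]_(k, k + l)) (m : 'I_k -> nat).
Hypothesis Tm : forall i j, (size (T i j) <= (m i).+1)%N.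

Let stack_deg (i : 'I_(k + l)) : nat := if split i is inl i' then m i' else 0%N.

Let size_stack (V : 'M[F]_(l, k + l)) i j :
  (size (stack_mx T V i j) <= (stack_deg i).+1)%N.
Proof.
rewrite /stack_mx -(splitK i) /stack_deg; case: (split i) => i'; rewrite unsplitK /=.
  by rewrite col_mxEu.
by rewrite col_mxEd mxE size_polyC leq_b1.
Qed.

Let sum_stack_deg : (\sum_i stack_deg i)%N = (\sum_i m i)%N.
Proof.
rewrite big_split_ord /= [X in (_ + X)%N]big1 ?addn0 => [|i _].
  by apply: eq_bigr => i _; rewrite /stack_deg (unsplitK (inl i : 'I_k + 'I_l)).
by rewrite /stack_deg (unsplitK (inr i : 'I_k + 'I_l)).
Qed.

Lemma size_det_stack (V : 'M[F]_(l, k + l)) :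
  (size (\det (stack_mx T V)) <= (\sum_i m i).+1)%N.
Proof. by rewrite -sum_stack_deg size_det_row_deg. Qed.

Lemma coef_det_stack (V : 'M[F]_(l, k + l)) :
  (\det (stack_mx T V))`_(\sum_i m i) = \det (col_mx (row_coef_mx m T) V).
Proof.
rewrite -sum_stack_deg coef_det_row_deg //; congr (\det _); apply/matrixP => i j.
rewrite mxE /stack_mx -(splitK i) /stack_deg; case: (split i) => i'; rewrite unsplitK /=.
  by rewrite !col_mxEu mxE.
by rewrite !col_mxEd !mxE coefC.
Qed.

(* V Q = [0 1] for Q the inverse of [A; V], so [T; V] Q is block upper triangular. *)
Lemma det_stack_complement (A : 'M[F]_(k, k + l)) (V : 'M[F]_(l, k + l)) :
  col_mx A V \in unitmx ->
  exists W : 'M[F]_(k + l, k), exists2 c : F, c != 0 &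
    \det (T *m map_mx polyC W) = c *: \det (stack_mx T V).
Proof.
move=> AVu; set Q := invmx (col_mx A V).
have VQ : V *m Q = row_mx 0 1%:M.
  have := mulmxV AVu; rewrite mul_col_mx scalar_mx_block block_mxEv.
  by case/eq_col_mx.
exists (lsubmx Q), (\det Q); first by rewrite -unitfE -unitmxE unitmx_inv.
have E : stack_mx T V *m map_mx polyC Q =
    block_mx (T *m map_mx polyC (lsubmx Q)) (T *m map_mx polyC (rsubmx Q)) 0 1%:M.
  rewrite /stack_mx mul_col_mx -map_mxM VQ map_row_mx map_mx0 map_mx1.
  by rewrite -{1}[Q](hsubmxK Q) map_row_mx mul_mx_row block_mxEv.
have := congr1 determinant E; rewrite det_mulmx det_ublock det1 mulr1 => <-.
by rewrite det_map_mx /= mulrC mul_polyC.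
Qed.

End Stack.

Lemma det_stack_lin (F : fieldType) k l (T : 'M[{poly F}]_(k, k + l.+1))
    (V : 'M[F]_(l, k + l.+1)) (a b : 'rV[F]_(k + l.+1)) (t : F) :
  \det (stack_mx T (col_mx (a + t *: b) V : 'M_(1 + l, _))) =
  \det (stack_mx T (col_mx a V : 'M_(1 + l, _))) +
    t *: \det (stack_mx T (col_mx b V : 'M_(1 + l, _))).
Proof.
pose G v := stack_mx T (col_mx v V : 'M_(1 + l, _)).
pose i0 : 'I_(k + (1 + l)) := rshift k (lshift l ord0).
have G_row' v w : row' i0 (G v) = row' i0 (G w).
  apply/matrixP => i j; rewrite [LHS]mxE [RHS]mxE /G /stack_mx !map_col_mx.
  have : lift i0 i != i0 by rewrite eq_sym neq_lift.
  rewrite -(splitK (lift i0 i)); case: (split _) => i1 /=; first by rewrite !col_mxEu.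
  rewrite !col_mxEd -(splitK i1); case: (split i1) => i2 /=; last by rewrite !col_mxEd.
  by rewrite [i2]ord1 eqxx.
rewrite -/(G _) -/(G a) -/(G b).
rewrite (@determinant_multilinear _ _ (G _) (G a) (G b) i0 1 t%:P _ (G_row' _ _) (G_row' _ _)).
  by rewrite mul1r mul_polyC.
by apply/rowP => j; rewrite !(col_mxEd, col_mxEu, mxE) mul1r polyCD polyCM.
Qed.

Section RowSpaces.
Variable F : fieldType.

Lemma row_free_col_mx_rV p N (A : 'M[F]_(p, N)) (v : 'rV_N) :
  row_free (col_mx A v) = row_free A && ~~ (v <= A)%MS.
Proof.
rewrite /row_free -addsmxE addn1; have [vA|vA] := boolP (v <= A)%MS.
  by rewrite (addsmx_idPl vA) andbF ltn_eqF // ltnS rank_leq_row.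
have -> : \rank (A + v)%MS = (\rank A).+1.
  apply/eqP; rewrite eqn_leq; apply/andP; split.
    apply: leq_trans (mxrank_adds_leqif A v) _.
    by rewrite rank_rV addnC (leq_add (leq_b1 _) (leqnn _)).
  by rewrite (ltn_leqif (mxrank_leqif_sup (addsmxSl A v))) addsmx_sub submx_refl.
by rewrite eqSS andbT.
Qed.

Lemma row_free_col_mx_swap k i N (A : 'M[F]_(k, N)) (v : 'rV_N) (V : 'M_(i, N)) :
  row_free (col_mx A (col_mx v V)) = row_free (col_mx (col_mx A V) v).
Proof.
have E1 : (col_mx A (col_mx v V) :=: A + (v + V))%MS.
  exact: eqmx_trans (eqmx_sym (addsmxE _ _)) (adds_eqmx (eqmx_refl A) (eqmx_sym (addsmxE v V))).
have E2 : (col_mx (col_mx A V) v :=: A + V + v)%MS.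
  exact: eqmx_trans (eqmx_sym (addsmxE _ _)) (adds_eqmx (eqmx_sym (addsmxE A V)) (eqmx_refl v)).
by rewrite /row_free E1 E2 (addsmxC v V) addsmxA addnA addnAC.
Qed.

(* Inside %MS, + is the sum of row spaces, hence the %R on vector sums. *)
Lemma notsub_add_scale m N (X : 'M[F]_(m, N)) (a b : 'rV_N) t :
  ~~ (a <= X)%MS -> ~~ (b <= col_mx X a)%MS -> ~~ ((a + t *: b)%R <= X)%MS.
Proof.
move=> aX baX; have [->|t0] := eqVneq t 0; first by rewrite scale0r addr0.
move: baX; apply: contra => abX.
have -> : b = t^-1 *: ((a + t *: b) - a) by rewrite addrAC subrr add0r scalerA mulVf ?scale1r.
rewrite scalemx_sub // addmx_sub // -?scaleN1r ?scalemx_sub // -addsmxE.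
  by rewrite (submx_trans abX) // addsmxSl.
exact: addsmxSr.
Qed.

Lemma exists_rV_notsub m N (U : 'M[F]_(m, N)) :
  (\rank U < N)%N -> exists v : 'rV_N, ~~ (v <= U)%MS.
Proof.
move=> rU; have : ~~ (1%:M <= U)%MS by rewrite sub1mx -col_leq_rank -ltnNge.
by case/row_subPn => i; exists (row i 1%:M).
Qed.

End RowSpaces.

Section GenericRowSpaces.
Variable F : closedFieldType.

Lemma generic_line_notsub m N (X : 'M[F]_(m, N)) (a b : 'rV_N) :
  ~~ (a <= X)%MS || ~~ (b <= X)%MS -> generic (fun t => ~~ ((a + t *: b)%R <= X)%MS).
Proof.
move=> abX; have [[t1 Xt1]|noX] := classic (exists t1, ((a + t1 *: b)%R <= X)%MS); last first.
  by exists [::] => t _; apply/negP => Xt; apply: noX; exists t.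
exists [:: t1] => t; rewrite mem_seq1 => tt1; move: abX; apply: contraL => Xt.
have bX : (b <= X)%MS.
  have -> : b = (t - t1)^-1 *: ((a + t *: b) - (a + t1 *: b)).
    by rewrite opprD addrACA subrr add0r -scalerBl scalerA mulVf ?subr_eq0 // scale1r.
  by rewrite scalemx_sub // addmx_sub // -scaleN1r scalemx_sub.
rewrite negb_or !negbK bX andbT -[a](addrK (t1 *: b)) addmx_sub //.
by rewrite -scaleN1r scalemx_sub ?scalemx_sub.
Qed.

Lemma avoid_subspaces N (Us : seq 'M[F]_N) :
  (forall U, U \in Us -> \rank U < N)%N ->
  exists v : 'rV_N, forall U, U \in Us -> ~~ (v <= U)%MS.
Proof.
elim: Us => [|U Us IHUs] rUs; first by exists 0.
have [|v vUs] := IHUs; first by move=> U' U'Us; apply: rUs; rewrite in_cons U'Us orbT.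
have [b bU] := exists_rV_notsub (rUs U (mem_head U Us)).
have [|t Ht] := generic_exists (generic_all
    (P := fun U' t => ~~ ((v + t *: b)%R <= U')%MS) (r := U :: Us) _).
  move=> U'; rewrite in_cons => /predU1P [->|U'Us]; apply: generic_line_notsub.
    by rewrite bU orbT.
  by rewrite vUs.
by exists (v + t *: b).
Qed.

Lemma generic_row_free p N (B : 'M[{poly F}]_(p, N)) z0 :
  row_free (mxpoly_eval B z0) -> generic (fun z => row_free (mxpoly_eval B z)).
Proof.
move=> Bz0; pose q := \det (B *m map_mx polyC (pinvmx (mxpoly_eval B z0))).
have qE z : ~~ root q z = row_free (mxpoly_eval B z *m pinvmx (mxpoly_eval B z0)).
  by rewrite root_det_mxpoly negbK mxpoly_evalM mxpoly_evalC.
have qz0 : ~~ root q z0 by rewrite qE mulmxVp // row_free_unit unitmx1.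
have q0 : q != 0 by apply: contraNneq qz0 => ->; rewrite root0.
have [s Hs] := generic_nonroot q0; exists s => z /Hs; rewrite qE -!row_leq_rank.
by move/leq_trans; apply; exact: mxrankM_maxl.
Qed.

Lemma generic_row_free_col_mx p N (B : 'M[{poly F}]_(p, N)) (a : 'rV[F]_N) z0 :
  row_free (col_mx (mxpoly_eval B z0) a) ->
  generic (fun z => row_free (col_mx (mxpoly_eval B z) a)).
Proof.
rewrite -mxpoly_eval_stack => /generic_row_free [s Hs].
by exists s => z /Hs; rewrite mxpoly_eval_stack.
Qed.

End GenericRowSpaces.

Section ExtendRows.
Variable F : closedFieldType.

(* a avoids B(z) outside a finite set Z; b avoids B(z) on Z and keeps [B(z); a; b]
   free outside another finite set Z'; a generic point of the line a + t b then
   avoids B(z) on Z' as well. *)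
Lemma extend_row p N (B : 'M[{poly F}]_(p, N)) (H : 'M[F]_(p, N)) :
  (p.+2 <= N)%N -> (forall z, row_free (mxpoly_eval B z)) -> row_free H ->
  exists v : 'rV[F]_N,
    (forall z, row_free (col_mx (mxpoly_eval B z) v)) /\ row_free (col_mx H v).
Proof.
move=> pN Bfree Hfree.
have [|a aB0] := exists_rV_notsub (_ : \rank (mxpoly_eval B 0) < N)%N.
  by rewrite (eqP (Bfree 0)) ltnW.
have /generic_row_free_col_mx gen_a : row_free (col_mx (mxpoly_eval B 0) a).
  by rewrite row_free_col_mx_rV Bfree.
have [za Ba] := gen_a; have [z1 Baz1] := generic_exists gen_a.
have [|b bUs] := avoid_subspaces (Us := <<col_mx (mxpoly_eval B z1) a>>%MS :: <<H>>%MS ::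
    [seq <<mxpoly_eval B z>>%MS | z <- za]).
  move=> U; rewrite !inE => /or3P [/eqP->|/eqP->|/mapP [z _ ->]]; rewrite genmxE.
  - by rewrite (eqP Baz1) addn1.
  - by rewrite (eqP Hfree) ltnW.
  - by rewrite (eqP (Bfree z)) ltnW.
have bH : ~~ (b <= H)%MS by have := bUs <<H>>%MS; rewrite genmxE !inE eqxx orbT => /(_ isT).
have bB z : z \in za -> ~~ (b <= mxpoly_eval B z)%MS.
  by move=> zza; have := bUs <<mxpoly_eval B z>>%MS; rewrite genmxE !inE map_f ?orbT // => /(_ isT).
have /generic_row_free_col_mx [zab Bab] : row_free (col_mx (mxpoly_eval (stack_mx B a) z1) b).
  rewrite mxpoly_eval_stack row_free_col_mx_rV Baz1.
  by have := bUs _ (mem_head _ _); rewrite genmxE.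
have [||t [tH tB]] := generic_exists (genericI (generic_line_notsub (a := a) (b := b) (X := H) _)
  (generic_all (r := zab) (P := fun z t => ~~ ((a + t *: b)%R <= mxpoly_eval B z)%MS) _)).
- by rewrite bH orbT.
- move=> z _; apply: generic_line_notsub; have [/bB -> //|zza] := boolP (z \in za).
    by rewrite orbT.
  by have := Ba z zza; rewrite row_free_col_mx_rV => /andP [_ ->].
exists (a + t *: b); split; last by rewrite row_free_col_mx_rV Hfree tH.
move=> z; rewrite row_free_col_mx_rV Bfree /=; have [/tB //|zzab] := boolP (z \in zab).
have := Bab z zzab; rewrite mxpoly_eval_stack !row_free_col_mx_rV.
by case/andP => /andP [_ aBz] baBz; apply: notsub_add_scale.
Qed.

Lemma extend_rows k N (B : 'M[{poly F}]_(k, N)) (H : 'M[F]_(k, N)) i :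
  (k + i < N)%N -> (forall z, row_free (mxpoly_eval B z)) -> row_free H ->
  exists V : 'M[F]_(i, N),
    (forall z, row_free (col_mx (mxpoly_eval B z) V)) /\ row_free (col_mx H V).
Proof.
move=> + Bfree Hfree; elim: i => [|i IHi] kiN.
  by exists 0; split=> [z|]; rewrite /row_free rank_col_mx0 addn0; [apply: Bfree|].
have [|V [BVfree HVfree]] := IHi; first by apply: leq_ltn_trans kiN; rewrite leq_add2l.
have [||v [BVv HVv]] := extend_row (B := stack_mx B V) _ _ HVfree.
- by rewrite -addnS.
- by move=> z; rewrite mxpoly_eval_stack.
exists (col_mx v V : 'M_(1 + i, N)); split=> [z|]; rewrite row_free_col_mx_swap //.
by have := BVv z; rewrite mxpoly_eval_stack.
Qed.

End ExtendRows.

Section StackSimpleZeros.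
Variables (F : closedFieldType) (k : nat) (m : 'I_k -> nat).
Hypothesis F0 : has_pchar0 F.
Local Notation M := (\sum_i m i)%N.

Lemma stack_no_rows (T : 'M[{poly F}]_(k, k + 0)) :
  (forall i j, size (T i j) <= (m i).+1)%N ->
  (forall z, row_free (mxpoly_eval T z)) -> row_free (row_coef_mx m T) ->
  exists V : 'M[F]_(0, k + 0), col_mx (row_coef_mx m T) V \in unitmx /\
    has_exactly_simple_zeros (\det (stack_mx T V)) M.
Proof.
move=> Tm Tfree Hfree; exists 0.
have free0 (A : 'M[F]_(k, k + 0)) : row_free A -> row_free (col_mx A (0 : 'M_(0, _))).
  by rewrite /row_free rank_col_mx0 => /eqP ->; rewrite addn0.
have unitH : col_mx (row_coef_mx m T) 0 \in unitmx by rewrite -row_free_unit free0.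
split=> //; apply: has_exactly_simple_zerosP => [|z].
  by apply/eqP; rewrite size_eqS_coef ?size_det_stack // coef_det_stack // -unitfE -unitmxE.
by rewrite root_det_mxpoly mxpoly_eval_stack free0.
Qed.

Lemma stack_last_row l (T : 'M[{poly F}]_(k, k + l.+1)) (V : 'M[F]_(l, k + l.+1)) :
  (forall i j, size (T i j) <= (m i).+1)%N ->
  (forall z, row_free (col_mx (mxpoly_eval T z) V)) -> row_free (col_mx (row_coef_mx m T) V) ->
  exists v : 'rV[F]_(k + l.+1),
    col_mx (row_coef_mx m T) (col_mx v V : 'M_(1 + l, _)) \in unitmx /\
    has_exactly_simple_zeros (\det (stack_mx T (col_mx v V : 'M_(1 + l, _)))) M.
Proof.
move=> Tm TVfree HVfree; set H := row_coef_mx m T.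
pose G v := \det (stack_mx T (col_mx v V : 'M_(1 + l, _))).
have unitHv v : (col_mx H (col_mx v V : 'M_(1 + l, _)) \in unitmx) = ~~ (v <= col_mx H V)%MS.
  by rewrite -row_free_unit row_free_col_mx_swap row_free_col_mx_rV HVfree.
have rootG v z : root (G v) z = (v <= col_mx (mxpoly_eval T z) V)%MS.
  by rewrite root_det_mxpoly mxpoly_eval_stack row_free_col_mx_swap row_free_col_mx_rV TVfree negbK.
have [|a aHV] := exists_rV_notsub (_ : \rank (col_mx H V) < k + l.+1)%N.
  by rewrite (eqP HVfree) addnS.
have sizeGa : size (G a) = M.+1.
  by apply/eqP; rewrite size_eqS_coef ?size_det_stack // coef_det_stack // -unitfE -unitmxE unitHv.
have [|rs rsE] := exists_root_seq (_ : G a != 0); first by rewrite -size_poly_eq0 sizeGa.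
have [b bTV] : exists b : 'rV_(k + l.+1),
    forall z, z \in rs -> ~~ (b <= col_mx (mxpoly_eval T z) V)%MS.
  have [|b bUs] := avoid_subspaces (Us := [seq <<col_mx (mxpoly_eval T z) V>>%MS | z <- rs]).
    by move=> _ /mapP [z _ ->]; rewrite genmxE (eqP (TVfree z)) addnS.
  exists b => z zrs; have := bUs _ (map_f (fun z => <<col_mx (mxpoly_eval T z) V>>%MS) zrs).
  by rewrite genmxE.
have coprime_ab : coprimep (G a) (G b).
  apply: Pdiv.ClosedField.root_coprimep => z; rewrite rsE => /bTV.
  by rewrite -rootG.
have [t [sizeGt Gt]] := generic_exists
  (generic_pencil_simple_zeros F0 sizeGa (size_det_stack Tm _) coprime_ab).
exists (a + t *: b); rewrite /G det_stack_lin; split=> //.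
by rewrite unitmxE unitfE -coef_det_stack // det_stack_lin -size_eqS_coef sizeGt.
Qed.

Lemma exists_stack_simple_zeros l (T : 'M[{poly F}]_(k, k + l)) :
  (forall i j, size (T i j) <= (m i).+1)%N ->
  (forall z, row_free (mxpoly_eval T z)) -> row_free (row_coef_mx m T) ->
  exists V : 'M[F]_(l, k + l), col_mx (row_coef_mx m T) V \in unitmx /\
    has_exactly_simple_zeros (\det (stack_mx T V)) M.
Proof.
case: l T => [|l] T Tm Tfree Hfree; first exact: stack_no_rows.
have [|V [TVfree HVfree]] := extend_rows (i := l) _ Tfree Hfree; first by rewrite ltn_add2l.
have [v [vunit vzeros]] := stack_last_row Tm TVfree HVfree.
by exists (col_mx v V).
Qed.

End StackSimpleZeros.

Definition set_col (R : Type) n k (A : 'M[R]_(n, k)) (j : 'I_k) (y : 'cV[R]_n) :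
  'M[R]_(n, k) := \matrix_(r, i) if i == j then y r 0 else A r i.

Lemma col_set_col (R : Type) n k (A : 'M[R]_(n, k)) j y i :
  col i (set_col A j y) = if i == j then y else col i A.
Proof. by apply/colP => r; rewrite !mxE; case: (i == j); rewrite ?mxE. Qed.

Lemma map_set_col (R R' : Type) (f : R -> R') n k (A : 'M[R]_(n, k)) j y :
  map_mx f (set_col A j y) = set_col (map_mx f A) j (map_mx f y).
Proof. by apply/matrixP => r i; rewrite !mxE; case: (i == j); rewrite ?mxE. Qed.

Section Kernels.
Variable K : fieldType.

Lemma exists_kernel_rV p q (A : 'M[K]_(p, q)) :
  ~~ row_free A -> exists2 v : 'rV_p, v != 0 & v *m A = 0.
Proof. by rewrite -kermx_eq0 => /rowV0Pn [v /sub_kermxP vA v0]; exists v. Qed.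

Lemma argmax_support p (v : 'rV[K]_p) (f : 'I_p -> nat) :
  v != 0 -> exists2 j, v 0 j != 0 & forall i, v 0 i != 0 -> (f i <= f j)%N.
Proof.
case/rV0Pn => i0 vi0.
by case: (arg_maxnP (P := fun i => v 0 i != 0) f vi0) => j; exists j.
Qed.

Lemma set_col_mul_eqmx n k (A : 'M[K]_(n, k)) (al : 'cV_k) j :
  al j 0 != 0 -> ((set_col A j (A *m al))^T :=: A^T)%MS.
Proof.
move=> alj; set B := (set_col A j (A *m al))^T.
have rowB i : row i B = if i == j then (A *m al)^T else row i A^T.
  by rewrite /B -tr_col col_set_col; case: (i == j); rewrite ?tr_col.
apply/eqmxP/andP; split; apply/row_subP => i.
  by rewrite rowB; case: (i == j); rewrite ?trmx_mul ?submxMl ?row_sub.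
have [->|ij] := eqVneq i j; last by have := row_sub i B; rewrite rowB (negPf ij).
have alB : ((A *m al)^T <= B)%MS by have := row_sub j B; rewrite rowB eqxx.
have -> : row j A^T = (al j 0)^-1 *: ((A *m al)^T - \sum_(i | i != j) al i 0 *: row i A^T).
  rewrite trmx_mul mulmx_sum_row (bigD1 j) //=; under eq_bigr do rewrite mxE.
  by rewrite addrK mxE scalerA mulVf // scale1r.
rewrite scalemx_sub // addmx_sub // -scaleN1r scalemx_sub // summx_sub // => l lj.
by rewrite scalemx_sub //; have := row_sub l B; rewrite rowB (negPf lj).
Qed.

End Kernels.

Section MinimalBasis.
Variables (F : fieldType) (m0 n k : nat).
Variables (P : 'M[{poly F}]_(m0, n)) (S : 'M[{poly F}]_(n, k)).
Local Notation tf := (@FracField.tofrac {poly F}).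
Local Notation m j := (vec_deg (col j S)).

Lemma size_col_leq r i : (size (S r i) <= (m i).+1)%N.
Proof. by rewrite /vec_deg (leq_trans _ (leqSpred _)) // (leq_trans _ (leq_bigmax r)) // mxE. Qed.

Lemma size_mulmx_col_leq (u : 'cV[{poly F}]_k) r b :
  (forall i, size (S r i * u i ord0)%R <= b)%N -> (size ((S *m u) r ord0) <= b)%N.
Proof.
move=> Sub; rewrite mxE (leq_trans (size_sum _ _ _)) //.
by apply/bigmax_leqP => i _; apply: Sub.
Qed.

Lemma col_deg_sum_set_col (j : 'I_k) (y : 'cV[{poly F}]_n) :
  (vec_deg y < m j)%N -> (col_deg_sum (set_col S j y) < col_deg_sum S)%N.
Proof.
move=> yS; rewrite /col_deg_sum (bigD1 j) //= [X in (_ < X)%N](bigD1 j) //=.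
rewrite col_set_col eqxx (eq_bigr (fun i => vec_deg (col i S))) ?ltn_add2r // => i /negPf ij.
by rewrite col_set_col ij.
Qed.

Lemma right_nullspace_poly_basis_set_col (j : 'I_k) (y : 'cV[{poly F}]_n)
    (al : 'cV[ratfun F]_k) :
  right_nullspace_poly_basis P S -> al j 0 != 0 -> fracmx y = fracmx S *m al ->
  right_nullspace_poly_basis P (set_col S j y).
Proof.
move=> [Snull Srank Sspan] alj Ey.
have ET : fracmx (set_col S j y) = set_col (fracmx S) j (fracmx S *m al).
  by rewrite -Ey /fracmx map_set_col.
have PS : fracmx P *m fracmx S = 0.
  apply/matrixP => r i; move: (Snull i); rewrite /in_right_nullspace => /matrixP /(_ r 0).
  by rewrite !mxE => E; apply: etrans E; apply: eq_bigr => c _; rewrite !mxE.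
have eqST := set_col_mul_eqmx (fracmx S) alj; rewrite -ET in eqST.
split.
- move=> i; rewrite /in_right_nullspace ET col_set_col; case: eqP => _; last exact: Snull.
  by rewrite mulmxA PS mul0mx.
- by rewrite -mxrank_tr eqST mxrank_tr.
- by move=> x /Sspan; rewrite eqST.
Qed.

Hypothesis S_min : right_minimal_basis P S.

(* Replacing column j by y gives another polynomial basis, which cannot have smaller degree. *)
Lemma right_minimal_basis_replace (j : 'I_k) (y : 'cV[{poly F}]_n)
    (al : 'cV[ratfun F]_k) :
  al j 0 != 0 -> fracmx y = fracmx S *m al -> exists r, (m j < size (y r ord0))%N.
Proof.
have [[Snull Srank Sspan] Smin] := S_min => alj Ey.
apply/existsP; apply: contraT; rewrite negb_exists => /forallP ysize.
have y0 : y != 0.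
  apply: contraNneq alj => y0; have /eqP : fracmx S *m al = 0 by rewrite -Ey y0 /fracmx map_mx0.
  rewrite -trmx_eq0 trmx_mul mulmx_free_eq0 ?trmx_eq0 => [/eqP ->|]; first by rewrite mxE.
  by rewrite /row_free mxrank_tr Srank.
have deg_y : (vec_deg y < m j)%N.
  have /cV0Pn [r yr] := y0.
  have : (0 < \max_(i < n) size (y i ord0))%N.
    by rewrite (leq_trans _ (leq_bigmax r)) // size_poly_gt0.
  rewrite /vec_deg -ltnS => /prednK ->.
  by apply/bigmax_leqP => i _; rewrite leqNgt ysize.
have := Smin _ _ (right_nullspace_poly_basis_set_col (And3 Snull Srank Sspan) alj Ey).
by rewrite leqNgt col_deg_sum_set_col.
Qed.

(* For v in the kernel of S(z)^T, X - z divides S v^T; the quotient replaces the column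
   of largest degree in the support of v. *)
Lemma right_minimal_basis_eval_free z : row_free (mxpoly_eval S^T z).
Proof.
apply/negPn/negP => /exists_kernel_rV [v v0 vS].
have [j vj jmax] := argmax_support (fun i => m i) v0.
pose w := S *m map_mx polyC v^T.
have dvd_w r : 'X - z%:P %| w r 0.
  have : mxpoly_eval w z = 0.
    by rewrite mxpoly_evalM mxpoly_evalC -[mxpoly_eval S z]trmxK -trmx_mul -mxpoly_eval_tr vS trmx0.
  by move/matrixP/(_ r 0); rewrite !mxE dvdp_XsubCl /root => ->.
pose y := \col_r (w r 0 %/ ('X - z%:P)).
pose al := (tf ('X - z%:P))^-1 *: fracmx (map_mx polyC v^T).
have [||r] := right_minimal_basis_replace (j := j) (y := y) (al := al).
- by rewrite !mxE mulf_neq0 ?invr_eq0 ?tofrac_eq0 ?polyXsubC_eq0 ?polyC_eq0.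
- rewrite /al -scalemxAr /fracmx -map_mxM -/w; apply/matrixP => r c.
  rewrite [c]ord1 mxE [y r 0]mxE [RHS]mxE [X in _ * X]mxE.
  rewrite -[w r 0 in RHS](divpK (dvd_w r)) rmorphM /= mulrC mulfK //.
  by rewrite tofrac_eq0 polyXsubC_eq0.
apply/negP; rewrite -leqNgt mxE size_divp ?polyXsubC_eq0 // size_XsubC leq_subLR add1n.
apply: size_mulmx_col_leq => i; rewrite !mxE.
have [->|vi] := eqVneq (v 0 i) 0; first by rewrite mulr0 size_poly0.
rewrite mulrC mul_polyC (leq_trans (size_scale_leq _ _)) //.
by rewrite (leq_trans (size_col_leq _ _)) // ltnS jmax.
Qed.

(* For v in the kernel of H^T, the column sum_i v_i X^(m_j - m_i) S_i, with j of largest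
   degree in the support of v, has degree below m_j. *)
Lemma right_minimal_basis_coef_free : row_free (row_coef_mx (fun i => m i) S^T).
Proof.
apply/negPn/negP => /exists_kernel_rV [v v0 vH].
have [j vj jmax] := argmax_support (fun i => m i) v0.
pose u := \col_i ((v 0 i)%:P * 'X^(m j - m i)).
have [||r] := right_minimal_basis_replace (j := j) (y := S *m u) (al := fracmx u).
- by rewrite !mxE subnn expr0 mulr1 tofrac_eq0 polyC_eq0.
- by rewrite /fracmx map_mxM.
have size_Su : (size ((S *m u) r ord0) <= (m j).+1)%N.
  apply: size_mulmx_col_leq => i; rewrite mxE.
  have [->|vi] := eqVneq (v 0 i) 0; first by rewrite mul0r mulr0 size_poly0.
  have mij := jmax i vi.
  have size_u : (size ((v 0 i)%:P * 'X^(m j - m i))%R <= (m j - m i).+1)%N.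
    by rewrite mul_polyC (leq_trans (size_scale_leq _ _)) // size_polyXn.
  rewrite (leq_trans (size_polyMleq _ _)) // -subn1 leq_subLR add1n.
  by rewrite -[X in (_ <= X.+2)%N](subnKC mij) -addnS -addSn leq_add // size_col_leq.
have coef_Su : ((S *m u) r 0)`_(m j) = 0.
  move/matrixP/(_ 0 r): vH; rewrite !mxE => vH.
  rewrite coef_sum; apply: etrans vH; apply: eq_bigr => i _; rewrite !mxE.
  have [->|vi] := eqVneq (v 0 i) 0; first by rewrite mul0r mulr0 coef0 mul0r.
  by rewrite mulrA coefMXn ltnNge leq_subr /= subKn ?jmax // coefMC mulrC.
apply/negP; rewrite -leqNgt; move: (size_Su).
by rewrite leq_eqVlt (size_eqS_coef size_Su) coef_Su eqxx.
Qed.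

End MinimalBasis.

Theorem right_minimal_basis_det_simple_zeros (F : closedFieldType) m0 n k
    (P : 'M[{poly F}]_(m0, n)) (S : 'M[{poly F}]_(n, k)) :
  has_pchar0 F -> right_minimal_basis P S ->
  exists W : 'M[F]_(k, n),
    has_exactly_simple_zeros (\det (map_mx polyC W *m S)) (\sum_(j < k) vec_deg (col j S)).
Proof.
move=> F0 S_min; have [[_ Srank _] _] := S_min.
have [l def_n] : exists l, n = (k + l)%N.
  by exists (n - k)%N; rewrite subnKC //; move: (rank_leq_row (fracmx S)); rewrite Srank.
subst n; have ST_size i j : (size (S^T i j) <= (vec_deg (col i S)).+1)%N.
  by rewrite mxE size_col_leq.
have [V [HVu Vzeros]] := exists_stack_simple_zeros F0 ST_size
  (right_minimal_basis_eval_free S_min) (right_minimal_basis_coef_free S_min).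
have [W [c c0 EW]] := det_stack_complement S^T HVu.
exists W^T; rewrite -det_tr trmx_mul map_trmx trmxK EW.
exact: has_exactly_simple_zerosZ.
Qed.

Unset Implicit Arguments.

Theorem theoremA3 (R : realType) (n k d : nat)
    (P : 'M[{poly R[i]}]_n) (S : 'M[{poly R[i]}]_(n, k)) :
  singular_mxpoly P ->
  mxpoly_deg P = d ->
  is_nrank P (n - k)%N ->
  right_minimal_basis P S ->
  let m := fun j : 'I_k => vec_deg (col j S) in
  let M := (\sum_(j < k) m j)%N in
  exists V : 'M[R[i]]_(n, k),
    has_exactly_simple_zeros (\det (map_mx polyC (conjT V) *m S)) M.
Proof.
move=> _ _ _ S_min m M.
have [W HW] := right_minimal_basis_det_simple_zeros (pchar_num _) S_min.
exists (map_mx (fun z => z^*) W)^T.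
by have -> : conjT (map_mx (fun z => z^*) W)^T = W by apply/matrixP => i j; rewrite !mxE conjCK.
Qed.
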